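(* Let $n\ge 1$ be an integer and $0<\gamma<1$. Then no root $\lambda$ of $D_a(\lambda)=\lambda^{2n-1}(\lambda-\gamma)^2-(1-\gamma)^2$ satisfies $|\lambda|>1$. *)

From mathcomp Require Import all_boot all_order all_algebra.
Set Implicit Arguments. Unset Strict Implicit. Unset Printing Implicit Defensive.
Import Order.TTheory GRing.Theory Num.Theory.
Local Open Scope ring_scope.

Definition Da (C : numClosedFieldType) (n : nat) (g : C) : {poly C} :=
  'X ^+ (2 * n - 1) * ('X - g%:P) ^+ 2 - ((1 - g) ^+ 2)%:P.

From mathcomp Require Import all_boot all_order all_algebra.
Import Order.TTheory GRing.Theory Num.Theory.
Local Open Scope ring_scope.

(* Taking norms in the root equation gives |l|^(2n-1) |l - g|^2 = (1 - g)^2.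
   If |l| > 1 then |l - g| >= |l| - g > 1 - g and |l|^(2n-1) > 1, so the left
   side strictly exceeds the right one. *)

Lemma rootDaE (C : numClosedFieldType) (n : nat) (g lam : C) :
  root (Da n g) lam = (lam ^+ (2 * n - 1) * (lam - g) ^+ 2 == (1 - g) ^+ 2).
Proof.
rewrite rootE /Da hornerD hornerN hornerM !horner_exp hornerXsubC hornerX.
by rewrite hornerC subr_eq0.
Qed.

Lemma norm_root_Da {C : numClosedFieldType} {n : nat} {g lam : C} :
  g <= 1 -> root (Da n g) lam ->
  `|lam| ^+ (2 * n - 1) * `|lam - g| ^+ 2 = (1 - g) ^+ 2.
Proof.
move=> g_le1; rewrite rootDaE => /eqP rootE.
by rewrite -!normrX -normrM rootE normrX ger0_norm ?subr_ge0.
Qed.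

Lemma ltr_norm_subr_pos (R : numDomainType) (g x : R) :
  0 < g -> 1 < `|x| -> 1 - g < `|x - g|.
Proof.
move=> g_gt0 x_gt1; apply: lt_le_trans (lerB_dist x g).
by rewrite (gtr0_norm g_gt0) ltrD2r.
Qed.

Theorem proposition2 (C : numClosedFieldType) (n : nat) (g : C) :
  (1 <= n)%N -> g \is Num.real -> 0 < g -> g < 1 ->
  forall lam : C, root (Da n g) lam -> ~ (1 < `|lam|).
Proof.
(* [g \is Num.real] already follows from [0 < g]. *)
move=> n_ge1 _ g_gt0 g_lt1 lam /(norm_root_Da (ltW g_lt1)) normE lam_gt1.
have exp_gt0 : (0 < 2 * n - 1)%N by rewrite subn_gt0 (leq_mul (leqnn 2) n_ge1).
have pow_gt1 : 1 < `|lam| ^+ (2 * n - 1) by rewrite exprn_egt1 -?lt0n.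
have dist_gt : (1 - g) ^+ 2 < `|lam - g| ^+ 2.
  by rewrite ltrXn2r ?subr_ge0 ?ltW // ltr_norm_subr_pos.
have dist_gt0 : 0 < `|lam - g| ^+ 2.
  by apply: le_lt_trans dist_gt; rewrite exprn_ge0 // subr_ge0 ltW.
move: pow_gt1; rewrite -(ltr_pMl _ dist_gt0) normE => /(lt_trans dist_gt).
by rewrite ltxx.
Qed.
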